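(* Let $G$ be a cograph. The following procedure always returns a recursively minimal coloring of $G$: Let $(T_G,t_G)$ be the discriminating cotree of $G$. Initially assign pairwise distinct colors to all vertices of $G$. Then traverse the inner vertices $v$ of $T_G$ from bottom to top (every vertex after all its descendants); whenever $t_G(v)=0$, let $\mathcal{G}$ be the set of connected components of $G(v)$, choose $G^*\in\mathcal{G}$ with maximum chromatic number $\chi(G^* )$, set $S:=\sigma(V(G^* ))$, and for every $G_j\in\mathcal{G}$ with $G_j\neq G^*$ choose (arbitrarily) an injective map $\phi:\sigma(V(G_j))\to S$ and replace $\sigma(x)$ by $\phi(\sigma(x))$ for all $x\in V(G_j)$; when $t_G(v)=1$ nothing is done. Moreover, every recursively minimal coloring of $G$ can be obtained as an output of this procedure for suitable choices made in it.
   Context: All graphs are finite, simple and undirected. A (proper vertex) coloring of $G=(V,E)$ is a surjective map $\sigma:V\to S$ with $\sigma(x)\neq\sigma(y)$ whenever $xy\in E$; $\chi(G)$ is the chromatic number. A cograph is a graph that is $K_1$, or a disjoint union of cographs, or a join of cographs. A cotree $(T,t)$ of a cograph $G$ is a rooted tree $T$ with leaf set $V$ and a labeling $t:V^0(T)\to\{0,1\}$ of its inner vertices such that for every inner vertex $u$, $G(u):=G[L(T(u))]$ (with $L(T(u))$ the leaves descending from $u$) is the disjoint union (if $t(u)=0$) or the join (if $t(u)=1$) of the graphs $G(v)$, $v$ a child of $u$. The discriminating cotree of $G$ is the unique cotree in which $t(u)\neq t(v)$ for every edge $uv$ of $T$ between two inner vertices. Color-minimal cographs are colored graphs $(G,\sigma)$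 ($\sigma$ a proper coloring) defined recursively: $(G,\sigma)$ is color-minimal if $|\sigma(V)|=\chi(G)$ and either $G=K_1$, or $G$ is the disjoint union, or the join, of at least two graphs $G_i$ such that each $(G_i,\sigma|_{V(G_i)})$ is a color-minimal cograph. A coloring $\sigma$ of $G$ is recursively minimal if $(G,\sigma)$ is a color-minimal cograph. *)

From mathcomp Require Import all_boot.
Set Implicit Arguments. Unset Strict Implicit. Unset Printing Implicit Defensive.

Record sgraph (V : finType) := SGraph {
  adj : rel V;
  adj_sym : symmetric adj;
  adj_irr : irreflexive adj }.

Section Graphs.
Variables (V : finType) (G : sgraph V).

(* the parts of P (a partition of A) pairwise see each other through
   no edges (b = false, disjoint union) or all edges (b = true, join) *)
Definition cross_all (P : {set {set V}}) (b : bool) : Prop :=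
  forall B1 B2, B1 \in P -> B2 \in P -> B1 != B2 ->
  forall x y, x \in B1 -> y \in B2 -> adj G x y = b.

(* cographs, stated for induced subgraphs G[A] *)
Inductive cograph_on : {set V} -> Prop :=
| cograph_K1 : forall x, cograph_on [set x]
| cograph_op : forall (A : {set V}) (P : {set {set V}}) (b : bool),
    partition P A -> 2 <= #|P| -> cross_all P b ->
    (forall B, B \in P -> cograph_on B) -> cograph_on A.

Definition cograph : Prop := cograph_on [set: V].

Definition colorableb (X : {set V}) (k : nat) : bool :=
  [exists f : {ffun V -> 'I_k},
     [forall x in X, forall y in X, adj G x y ==> (f x != f y)]].

Lemma colorable_exists (X : {set V}) : exists k, colorableb X k.
Proof.
exists #|V|; apply/existsP; exists [ffun x => enum_rank x].
apply/forallP => x; apply/implyP => _; apply/forallP => y; apply/implyP => _.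
apply/implyP => hxy; rewrite !ffunE; apply/negP => /eqP /enum_rank_inj exy.
by move: hxy; rewrite exy adj_irr.
Qed.

Definition chi (X : {set V}) : nat := ex_minn (colorable_exists X).

Definition proper_on (X : {set V}) (s : V -> nat) : Prop :=
  forall x y, x \in X -> y \in X -> adj G x y -> s x != s y.

Definition colors (s : V -> nat) (X : {set V}) : seq nat :=
  undup [seq s x | x <- enum X].

Definition ncol (s : V -> nat) (X : {set V}) : nat := size (colors s X).

Inductive color_minimal (s : V -> nat) : {set V} -> Prop :=
| cm_K1 : forall x, ncol s [set x] = chi [set x] -> color_minimal s [set x]
| cm_op : forall (A : {set V}) (P : {set {set V}}) (b : bool),
    partition P A -> 2 <= #|P| -> cross_all P b ->
    (forall B, B \in P -> color_minimal s B) ->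
    ncol s A = chi A -> color_minimal s A.

Definition rec_minimal (s : V -> nat) : Prop :=
  proper_on [set: V] s /\ color_minimal s [set: V].

Definition restr (A : {set V}) : rel V :=
  fun x y => [&& adj G x y, x \in A & y \in A].

Definition components (A : {set V}) : {set {set V}} :=
  [set [set y in A | connect (restr A) x y] | x in A].

End Graphs.

Inductive cotree (V : Type) :=
| Leaf of V
| Node of bool & seq (cotree V).
Arguments Leaf {V}.
Arguments Node {V}.

Fixpoint leaves (V : Type) (t : cotree V) : seq V :=
  match t with
  | Leaf v => [:: v]
  | Node _ cs => flatten (map (@leaves V) cs)
  end.

(* the vertex of T at position p (a path of child indices from the root) *)
Fixpoint subtree (V : Type) (t : cotree V) (p : seq nat) : option (cotree V) :=
  match p with
  | [::] => Some t
  | i :: p' =>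
      match t with
      | Leaf _ => None
      | Node _ cs => obind (fun c => subtree c p') (onth cs i)
      end
  end.

Section Cotrees.
Variables (V : finType) (G : sgraph V).

Definition leafset (t : cotree V) : {set V} := [set x | x \in leaves t].

(* (T,t) is a cotree of G: leaf set is V (each vertex exactly once),
   every inner vertex has at least two children, and G(u) is the disjoint
   union (label false = 0) or join (label true = 1) of the G(v), v child of u *)
Definition is_cotree (T : cotree V) : Prop :=
  perm_eq (leaves T) (enum V) /\
  forall p b cs, subtree T p = Some (Node b cs) ->
    2 <= size cs /\
    forall i j ci cj, i != j -> onth cs i = Some ci -> onth cs j = Some cj ->
      forall x y, x \in leaves ci -> y \in leaves cj -> adj G x y = b.

Definition discriminating (T : cotree V) : Prop :=
  forall p b cs, subtree T p = Some (Node b cs) ->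
  forall i b' cs', onth cs i = Some (Node b' cs') -> b' != b.

Definition discr_cotree (T : cotree V) : Prop :=
  is_cotree T /\ discriminating T.

Definition inner (T : cotree V) (p : seq nat) : Prop :=
  exists b cs, subtree T p = Some (Node b cs).

Definition traversal (T : cotree V) (ord : seq (seq nat)) : Prop :=
  uniq ord /\ (forall p, p \in ord <-> inner T p) /\
  (forall p q, p \in ord -> q \in ord -> prefix p q -> p != q ->
     index q ord < index p ord).

Definition union_step (L : {set V}) (s s' : V -> nat) : Prop :=
  exists2 Gs, Gs \in components G L &
  (forall Gj, Gj \in components G L -> chi G Gj <= chi G Gs) /\
  exists Phi : {set V} -> nat -> nat,
    (forall Gj, Gj \in components G L -> Gj != Gs ->
       {in colors s Gj, injective (Phi Gj)} /\
       {in colors s Gj, forall c, Phi Gj c \in colors s Gs} /\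
       {in Gj, forall x, s' x = Phi Gj (s x)}) /\
    (forall x, x \notin L :\: Gs -> s' x = s x).

Definition step (T : cotree V) (p : seq nat) (s s' : V -> nat) : Prop :=
  match subtree T p with
  | Some (Node false cs) => union_step (leafset (Node false cs)) s s'
  | _ => s' =1 s
  end.

Fixpoint run (T : cotree V) (ord : seq (seq nat)) (s s' : V -> nat) : Prop :=
  match ord with
  | [::] => s' =1 s
  | p :: ord' => exists s1, step T p s s1 /\ run T ord' s1 s'
  end.

End Cotrees.

From mathcomp Require Import all_boot.
From Stdlib Require Import FunctionalExtensionality.
From Stdlib Require List.
Set Implicit Arguments. Unset Strict Implicit. Unset Printing Implicit Defensive.

(* Along a bottom-up traversal, every processed vertex of the cotree is optimally
   colored, and two vertices share a color only below a common processed vertex. At a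
   1-vertex the children thus use disjoint color sets, so the join is optimally colored;
   at a 0-vertex the children are optimally colored, so each component can be relabelled
   injectively into the colors of one of maximum chromatic number.
   Conversely, a recursively minimal coloring is optimal at every vertex of the
   discriminating cotree, since a decomposition of an induced subgraph into at least two
   pairwise non-adjacent (or completely adjacent) parts can only group whole children of
   a cotree vertex with the same label. Such a coloring is the output of the postorder
   run started from the injective coloring that pairs each color with a tag recording
   the deepest non-kept child of a 0-vertex above the vertex: each union step only
   replaces the tags created at its vertex by the tag of the vertex itself. *)

Lemma uniq_size_eqi (T : eqType) (s1 s2 : seq T) :
  uniq s1 -> uniq s2 -> s1 =i s2 -> size s1 = size s2.
Proof. by move=> u1 u2 e12; apply/perm_size/uniq_perm. Qed.

Section Colorings.
Variables (V : finType) (G : sgraph V).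
Implicit Types (s : V -> nat) (X Y : {set V}).

Lemma colorsP s X c : reflect (exists2 x, x \in X & c = s x) (c \in colors s X).
Proof.
rewrite /colors mem_undup.
by apply: (iffP mapP) => -[x]; rewrite ?mem_enum; exists x; rewrite ?mem_enum.
Qed.

Lemma mem_colors s X x : x \in X -> s x \in colors s X.
Proof. by move=> xX; apply/colorsP; exists x. Qed.

Lemma uniq_colors s X : uniq (colors s X). Proof. exact: undup_uniq. Qed.

Lemma eq_ncol s X s' Y : colors s X =i colors s' Y -> ncol s X = ncol s' Y.
Proof. by apply: uniq_size_eqi; apply: uniq_colors. Qed.

Lemma eq_in_ncol s s' X : {in X, s =1 s'} -> ncol s X = ncol s' X.
Proof.
move=> ss'; apply: eq_ncol => c.
by apply/colorsP/colorsP => -[x xX ->]; exists x; rewrite ?ss'.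
Qed.

Lemma ncol0 s : ncol s set0 = 0.
Proof. by rewrite /ncol /colors enum_set0. Qed.

Lemma ncol1 s x : ncol s [set x] = 1.
Proof. by rewrite /ncol /colors enum_set1. Qed.

Lemma ncolU s X Y : (forall x y, x \in X -> y \in Y -> s x != s y) ->
  ncol s (X :|: Y) = ncol s X + ncol s Y.
Proof.
move=> sXY; rewrite /ncol -size_cat; apply: uniq_size_eqi; rewrite ?uniq_colors //.
  rewrite cat_uniq !uniq_colors /= andbT; apply/hasPn => c /colorsP [y yY ->].
  by apply/colorsP => -[x xX] /eqP; apply/negP; rewrite eq_sym sXY.
move=> c; rewrite mem_cat; apply/colorsP/orP.
  by move=> [x]; rewrite inE => /orP [] xX ->; [left|right]; apply: mem_colors.
by move=> [] /colorsP [x xX ->]; exists x; rewrite // inE xX ?orbT.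
Qed.

Lemma ncol_relabel s s' g X : {in X, forall x, s' x = g (s x)} ->
  {in colors s X &, injective g} -> ncol s' X = ncol s X.
Proof.
move=> s'E g_inj; rewrite /ncol -(size_map g (colors s X)).
apply: uniq_size_eqi; rewrite ?uniq_colors ?map_inj_in_uniq ?uniq_colors // => c.
apply/colorsP/mapP => [[x xX ->]|[_ /colorsP[x xX ->] ->]]; last by exists x; rewrite ?s'E.
by exists (s x); rewrite ?mem_colors ?s'E.
Qed.

Lemma eq_in_proper s s' X : {in X, s =1 s'} -> proper_on G X s -> proper_on G X s'.
Proof. by move=> ss' sX x y xX yX xy; rewrite -!ss' //; apply: sX. Qed.

Lemma proper_onS X Y s : X \subset Y -> proper_on G Y s -> proper_on G X s.
Proof. by move=> /subsetP XY sY x y xX yX; apply: sY; apply: XY. Qed.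

Lemma chi_le_ncol X s x0 : x0 \in X -> proper_on G X s -> chi G X <= ncol s X.
Proof.
move=> x0X sX; rewrite /chi; case: ex_minnP => m _ m_min; apply: m_min.
have: 0 < ncol s X by rewrite lt0n size_eq0; apply: contraTneq (mem_colors s x0X) => ->.
case nX: (ncol s X) => [//|n] _.
have idx_lt z : z \in X -> index (s z) (colors s X) < n.+1.
  by move=> zX; rewrite -nX /ncol index_mem mem_colors.
apply/existsP; exists [ffun y => inord (index (s y) (colors s X))].
apply/forallP => x; apply/implyP => xX; apply/forallP => y; apply/implyP => yX.
apply/implyP => xy; rewrite !ffunE; apply: contra (sX x y xX yX xy) => /eqP.
move/(congr1 (@nat_of_ord _)); rewrite !inordK ?idx_lt //.
by move/(congr1 (nth 0 (colors s X))); rewrite !nth_index ?mem_colors // => ->.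
Qed.

Lemma chi_optimal X : exists2 s, proper_on G X s & ncol s X <= chi G X.
Proof.
rewrite /chi; case: ex_minnP => m /existsP [f /forallP f_ok] _.
exists (fun x => val (f x)).
  move=> x y xX yX xy; move/(_ x): f_ok; rewrite xX => /forallP /(_ y).
  by rewrite yX xy /=; apply: contra => /eqP /val_inj ->.
apply: (@leq_trans (size (iota 0 m))); last by rewrite size_iota.
apply: uniq_leq_size; rewrite ?uniq_colors //.
by move=> c /colorsP [x _ ->]; rewrite mem_iota /= add0n ltn_ord.
Qed.

Lemma chiS X Y : X \subset Y -> chi G X <= chi G Y.
Proof.
move=> /subsetP XY; rewrite {2}/chi; case: ex_minnP => m /existsP [f /forallP f_ok] _.
rewrite /chi; case: ex_minnP => m' _ m'_min; apply: m'_min; apply/existsP; exists f.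
apply/forallP => x; apply/implyP => xX; apply/forallP => y; apply/implyP => yX.
by move/(_ x): f_ok; rewrite XY //= => /forallP /(_ y); rewrite XY.
Qed.

Lemma chi1 x : chi G [set x] = 1.
Proof.
rewrite /chi; case: ex_minnP => [[|m]] => [/existsP [f _] | _ m_min]; first by case: (f x).
apply/eqP; rewrite eqSS -leqn0 -ltnS m_min //; apply/existsP; exists [ffun _ => ord0].
apply/forallP => y; apply/implyP; rewrite inE => /eqP ->.
by apply/forallP => z; apply/implyP; rewrite inE => /eqP ->; rewrite adj_irr.
Qed.

Definition optimal_on X s := proper_on G X s /\ ncol s X = chi G X.

Lemma optimal_K1 s x : optimal_on [set x] s.
Proof.
rewrite /optimal_on ncol1 chi1; split => // y z; rewrite !inE => /eqP -> /eqP ->.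
by rewrite adj_irr.
Qed.

Lemma eq_in_optimal s s' X : {in X, s =1 s'} -> optimal_on X s -> optimal_on X s'.
Proof. by move=> ss' [sX nX]; split; [apply: eq_in_proper sX | rewrite -(eq_in_ncol ss')]. Qed.

Lemma optimal_relabel s s' g X : {in X, forall x, s' x = g (s x)} ->
  {in colors s X &, injective g} -> optimal_on X s -> optimal_on X s'.
Proof.
move=> s'E g_inj [sX nX]; split; last by rewrite (ncol_relabel s'E g_inj).
move=> x y xX yX xy; rewrite !s'E //; apply: contra (sX x y xX yX xy) => /eqP.
by move/g_inj => -> //; apply: mem_colors.
Qed.

End Colorings.

Definition cotree0 {V : Type} : cotree V := Node false [::].
Notation child cs i := (nth cotree0 cs i).

Section Cotrees.
Variable V : finType.
Implicit Types (t : cotree V) (cs : seq (cotree V)) (p q : seq nat).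

Fixpoint cotree_ind_in (P : cotree V -> Prop) (PL : forall v, P (Leaf v))
  (PN : forall b cs, (forall c, List.In c cs -> P c) -> P (Node b cs)) t : P t :=
  match t with
  | Leaf v => PL v
  | Node b cs => PN b cs ((fix all_P l : forall c, List.In c l -> P c :=
      match l with
      | [::] => fun c c_in => False_ind _ c_in
      | c0 :: l' => fun c c_in => match c_in with
                    | or_introl e => eq_ind c0 P (cotree_ind_in PL PN c0) c e
                    | or_intror c_in' => all_P l' c c_in' end
      end) cs)
  end.

Lemma cotree_ind_nth (P : cotree V -> Prop) : (forall v, P (Leaf v)) ->
  (forall b cs, (forall i, i < size cs -> P (child cs i)) -> P (Node b cs)) -> forall t, P t.
Proof.
move=> PL PN; elim/cotree_ind_in => // b cs Pcs; apply: PN => i.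
elim: cs i {Pcs}(Pcs) => [|c cs IHcs] [|i] //= Pccs ics; first by apply: Pccs; left.
by apply: IHcs => // c' c'_in; apply: Pccs; right.
Qed.

Lemma onth_nth cs i : i < size cs -> onth cs i = Some (child cs i).
Proof. by elim: cs i => [|c cs IHcs] [|i] //= ics; apply: IHcs. Qed.

Lemma onthP cs i c : onth cs i = Some c -> i < size cs /\ c = child cs i.
Proof. by elim: cs i => [|c' cs IHcs] [|i] //= => [[->]|/IHcs]. Qed.

Lemma subtree_cons b cs i p : i < size cs ->
  subtree (Node b cs) (i :: p) = subtree (child cs i) p.
Proof. by move=> ics; rewrite /= onth_nth. Qed.

Lemma subtree_cat t p q :
  subtree t (p ++ q) = obind (fun u => subtree u q) (subtree t p).
Proof.
elim: p t => [|i p IHp] [v|b cs] //=.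
by case: (onth cs i) => //= c; rewrite IHp.
Qed.

Lemma subtree_rcons p t b cs i : subtree t p = Some (Node b cs) -> i < size cs ->
  subtree t (rcons p i) = Some (child cs i).
Proof. by move=> tp ics; rewrite -cats1 subtree_cat tp /= onth_nth. Qed.

Lemma leafset_leaf (v : V) : leafset (Leaf v) = [set v].
Proof. by apply/setP => x; rewrite !inE. Qed.

Lemma leafset_cons b c cs :
  leafset (Node b (c :: cs)) = leafset c :|: leafset (Node b cs).
Proof. by apply/setP => x; rewrite !inE /= mem_cat. Qed.

Lemma leafset_nodeP b cs x :
  reflect (exists2 i, i < size cs & x \in leafset (child cs i)) (x \in leafset (Node b cs)).
Proof.
elim: cs => [|c cs IHcs]; first by rewrite inE; constructor => -[].
rewrite leafset_cons inE; apply: (iffP orP) => [[xc|/IHcs[i ics xi]]|[[|i] ics xi]].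
- by exists 0.
- by exists i.+1.
- by left.
by right; apply/IHcs; exists i.
Qed.

Lemma leafset_child b cs i : i < size cs -> leafset (child cs i) \subset leafset (Node b cs).
Proof. by move=> ics; apply/subsetP => x xi; apply/leafset_nodeP; exists i. Qed.

Lemma leafset_subtree t p u : subtree t p = Some u -> leafset u \subset leafset t.
Proof.
elim: p t => [|i p IHp] [v|b cs] //=; [by case=> <- | by case=> <- |].
case ti: (onth cs i) => [c|] //= cu; case/onthP: ti => ics ?; subst c.
exact: subset_trans (IHp _ cu) (leafset_child b ics).
Qed.

Lemma find_leafset_unique cs i x : i < size cs -> x \in leafset (child cs i) ->
  (forall j, j < size cs -> x \in leafset (child cs j) -> j = i) ->
  find (fun c => x \in leaves c) cs = i.
Proof.
elim: cs i => [|c cs IHcs] // [|i] /= ics; rewrite inE => xi eq_i; first by rewrite xi.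
case: ifP => xc; first by have := eq_i 0 isT; rewrite inE xc => /(_ isT).
congr S; apply: IHcs; rewrite ?inE // => j jcs xj.
by case: (eq_i j.+1 jcs xj).
Qed.

End Cotrees.

Section DiscriminatingCotrees.
Variables (V : finType) (G : sgraph V).
Implicit Types (t : cotree V) (cs : seq (cotree V)) (p q : seq nat).

Definition dcotree t := uniq (leaves t) /\
  (forall p b cs, subtree t p = Some (Node b cs) ->
    2 <= size cs /\
    forall i j ci cj, i != j -> onth cs i = Some ci -> onth cs j = Some cj ->
      forall x y, x \in leaves ci -> y \in leaves cj -> adj G x y = b) /\
  discriminating t.

Lemma discr_cotree_dcotree t : discr_cotree G t -> dcotree t /\ leafset t = setT.
Proof.
case=> [[tV t_ok] t_disc]; split; first by rewrite /dcotree (perm_uniq tV) enum_uniq.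
by apply/setP => x; rewrite !inE (perm_mem tV) mem_enum.
Qed.

Lemma uniq_leaves_child b cs i : uniq (leaves (Node b cs)) -> i < size cs ->
  uniq (leaves (child cs i)).
Proof.
elim: cs i => [|c cs IHcs] // [|i]; rewrite /= cat_uniq => /and3P [uc _ ucs] //.
exact: IHcs.
Qed.

Lemma dcotree_subtree t p u : dcotree t -> subtree t p = Some u -> dcotree u.
Proof.
move=> [ut [t_ok t_disc]] tp; split; last split => [q b cs uq|q b cs uq].
- elim: p t ut tp {t_ok t_disc} => [|i p IHp] [v|b cs] //= ut; [by case=> <- | by case=> <- |].
  case ti: (onth cs i) => [c|] //= cu; case/onthP: ti => ics ?; subst c.
  exact: IHp (uniq_leaves_child ut ics) cu.
- by apply: (t_ok (p ++ q)); rewrite subtree_cat tp.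
by apply: (t_disc (p ++ q)); rewrite subtree_cat tp.
Qed.

Section Node.
Variables (b : bool) (cs : seq (cotree V)).
Hypothesis tree_b : dcotree (Node b cs).

Lemma dcotree_size : 2 <= size cs.
Proof. by case: tree_b => _ [/(_ [::] b cs erefl) []]. Qed.

Lemma dcotree_size_gt0 : 0 < size cs.
Proof. exact: ltn_trans dcotree_size. Qed.

Lemma dcotree_cross i j x y : i < size cs -> j < size cs -> i != j ->
  x \in leafset (child cs i) -> y \in leafset (child cs j) -> adj G x y = b.
Proof.
case: tree_b => _ [/(_ [::] b cs erefl) [_ cross] _] ics jcs ij; rewrite !inE.
by apply: (cross i j); rewrite ?onth_nth.
Qed.

Lemma dcotree_disc i b' cs' : i < size cs -> child cs i = Node b' cs' -> b' != b.
Proof.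
by case: tree_b => _ [_ disc] ics csi; apply: (disc [::] b cs erefl i); rewrite onth_nth ?csi.
Qed.

Lemma dcotree_disj i j x : i < size cs -> j < size cs ->
  x \in leafset (child cs i) -> x \in leafset (child cs j) -> i = j.
Proof.
case: tree_b => + _; rewrite /= !inE.
elim: (cs) i j => [|c cs' IHcs] // [|i] [|j] //=;
  rewrite cat_uniq => /and3P [_ /hasPn c_cs u_cs] ics jcs.
- move=> xc xj; have : x \in leafset (Node b cs') by apply/leafset_nodeP; exists j; rewrite ?inE.
  by rewrite inE => /c_cs; rewrite xc.
- move=> xi xc; have : x \in leafset (Node b cs') by apply/leafset_nodeP; exists i; rewrite ?inE.
  by rewrite inE => /c_cs; rewrite xc.
by move=> xi xj; rewrite (IHcs i j).
Qed.

Lemma dcotree_child i : i < size cs -> dcotree (child cs i).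
Proof. by move=> ics; apply: (dcotree_subtree (p := [:: i])) tree_b _; rewrite /= onth_nth. Qed.

End Node.

Lemma dcotree_leafset_neq0 t : dcotree t -> exists x, x \in leafset t.
Proof.
elim/cotree_ind_nth: t => [v|b cs IHcs] tree_t; first by exists v; rewrite !inE.
have cs0 := dcotree_size_gt0 tree_t.
have [x x0] := IHcs 0 cs0 (dcotree_child tree_t cs0).
by exists x; apply/leafset_nodeP; exists 0.
Qed.

Lemma dcotree_child_neq0 b cs i : dcotree (Node b cs) -> i < size cs ->
  exists x, x \in leafset (child cs i).
Proof. by move=> tree_b ics; apply/dcotree_leafset_neq0/(dcotree_child tree_b). Qed.

Lemma dcotree_two_leaves b cs : dcotree (Node b cs) ->
  exists x y, [/\ x \in leafset (Node b cs), y \in leafset (Node b cs) & x != y].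
Proof.
move=> tree_b; have [cs0 cs1] := (dcotree_size_gt0 tree_b, dcotree_size tree_b).
have [[x x0] [y y1]] := (dcotree_child_neq0 tree_b cs0, dcotree_child_neq0 tree_b cs1).
exists x, y; split; [apply/leafset_nodeP; exists 0 | apply/leafset_nodeP; exists 1 |] => //.
by apply: contraNneq (isT : 0 != 1) => exy; apply/eqP/(dcotree_disj tree_b cs0 cs1 x0); rewrite exy.
Qed.

Lemma dcotree_leafset_inj b cs i j : dcotree (Node b cs) -> i < size cs -> j < size cs ->
  leafset (child cs i) = leafset (child cs j) -> i = j.
Proof.
move=> tree_b ics jcs eij; have [x xi] := dcotree_child_neq0 tree_b ics.
by apply: (dcotree_disj tree_b ics jcs xi); rewrite -eij.
Qed.

Lemma dcotree_find b cs i x : dcotree (Node b cs) -> i < size cs -> x \in leafset (child cs i) ->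
  find (fun c => x \in leaves c) cs = i.
Proof.
move=> tree_b ics xi; apply: find_leafset_unique => // j jcs xj.
exact: (dcotree_disj tree_b jcs ics xj xi).
Qed.

Lemma dcotree_prefix t p q u1 u2 x : dcotree t ->
  subtree t p = Some u1 -> subtree t q = Some u2 ->
  x \in leafset u1 -> x \in leafset u2 -> prefix p q || prefix q p.
Proof.
elim: p q t => [|i p IHp] [|j q] [v|b cs] //=; rewrite ?prefix0s ?orbT //.
case ti: (onth cs i) => [ci|] //=; case tj: (onth cs j) => [cj|] //= tree_b ci_u1 cj_u2 x1 x2.
case/onthP: ti => ics ?; case/onthP: tj => jcs ?; subst ci cj.
have xi := subsetP (leafset_subtree ci_u1) x x1.
have xj := subsetP (leafset_subtree cj_u2) x x2.
have ij := dcotree_disj tree_b ics jcs xi xj; subst j.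
by rewrite /= !eqxx; apply: IHp (dcotree_child tree_b ics) ci_u1 cj_u2 x1 x2.
Qed.

End DiscriminatingCotrees.

Section Components.
Variables (V : finType) (G : sgraph V).
Implicit Types (cs : seq (cotree V)) (A : {set V}).

Definition rel_on (e : rel V) A : rel V := fun x y => [&& e x y, x \in A & y \in A].

Definition cadj (b : bool) : rel V := fun x y => (x != y) && (adj G x y != b).

Lemma connect_closed (e : rel V) A x y : (forall u w, u \in A -> e u w -> w \in A) ->
  connect e x y -> x \in A -> y \in A.
Proof.
move=> A_closed /connectP [p + ->]; elim: p x => //= z p IHp x /andP [xz zp] xA.
exact: IHp zp (A_closed x z xA xz).
Qed.

Lemma connect_multipartite (T : eqType) (e : rel V) A (part : V -> T) :
  {in A &, forall x y, part x != part y -> e x y} ->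
  {in A, forall x, exists2 z, z \in A & part z != part x} ->
  {in A &, forall x y, connect (rel_on e A) x y}.
Proof.
move=> e_cross part_other x y xA yA; have e_onA u w : u \in A -> w \in A ->
    part u != part w -> connect (rel_on e A) u w.
  by move=> uA wA uw; apply: connect1; rewrite /rel_on uA wA e_cross.
have [xy|] := eqVneq (part x) (part y); last exact: e_onA.
have [z zA zx] := part_other x xA.
by apply: (connect_trans (e_onA x z xA zA _) (e_onA z y zA yA _)); rewrite -?xy // eq_sym.
Qed.

(* The children of a child labelled ~~ b are pairwise completely ~~ b-adjacent,
   i.e. they are the parts of a complete multipartite graph for cadj b. *)
Lemma dcotree_child_connected b cs i : dcotree G (Node b cs) -> i < size cs ->
  {in leafset (child cs i) &, forall x y, connect (rel_on (cadj b) (leafset (child cs i))) x y}.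
Proof.
move=> tree_b ics; have := dcotree_child tree_b ics; have := dcotree_disc tree_b ics.
case: (child cs i) => [v|b' cs'] b'b tree_i.
  by move=> x y; rewrite leafset_leaf !inE => /eqP -> /eqP ->; apply: connect0.
have cs'2 := dcotree_size tree_i; have cs'0 := dcotree_size_gt0 tree_i.
have b'_neq_b := b'b b' cs' erefl.
apply: (connect_multipartite (part := fun x => find (fun c => x \in leaves c) cs')).
  move=> u w /leafset_nodeP [j jcs uj] /leafset_nodeP [k kcs wk].
  rewrite (dcotree_find tree_i jcs uj) (dcotree_find tree_i kcs wk) => jk.
  rewrite /cadj (dcotree_cross tree_i jcs kcs jk uj wk) b'_neq_b andbT.
  by apply: contra jk => /eqP uw; subst w; rewrite (dcotree_disj tree_i jcs kcs uj wk).
move=> u /leafset_nodeP [j jcs uj]; pose k := (j == 0 : nat).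
have kcs : k < size cs' by rewrite /k; case: (j == 0).
have [z zk] := dcotree_child_neq0 tree_i kcs.
exists z; first by apply/leafset_nodeP; exists k.
by rewrite (dcotree_find tree_i jcs uj) (dcotree_find tree_i kcs zk) /k; case: (j).
Qed.

Lemma component_child cs i x : dcotree G (Node false cs) -> i < size cs ->
  x \in leafset (child cs i) ->
  [set y in leafset (Node false cs) | connect (restr G (leafset (Node false cs))) x y]
  = leafset (child cs i).
Proof.
move=> tree_0 ics xi; apply/setP => y; rewrite inE; apply/andP/idP => [[_ xy]|yi].
  apply: (connect_closed _ xy xi) => u w ui /and3P [uw _ /leafset_nodeP [j jcs wj]].
  have [-> //|ij] := eqVneq i j.
  by rewrite (dcotree_cross tree_0 ics jcs ij ui wj) in uw.
split; first exact: subsetP (leafset_child false ics) y yi.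
apply: connect_sub (dcotree_child_connected tree_0 ics xi yi) => u w.
case/and3P => /andP [_ uw] ui wi; apply: connect1; move: uw.
by rewrite /restr; case: (adj G u w) => //= _; rewrite !(subsetP (leafset_child false ics)).
Qed.

Lemma components_node cs X : dcotree G (Node false cs) ->
  X \in components G (leafset (Node false cs)) <->
  exists2 i, i < size cs & X = leafset (child cs i).
Proof.
move=> tree_0; split=> [/imsetP [x /leafset_nodeP [i ics xi] ->]|[i ics ->]].
  by exists i => //; apply: component_child.
have [x xi] := dcotree_child_neq0 tree_0 ics.
apply/imsetP; exists x; first exact: subsetP (leafset_child false ics) x xi.
by rewrite (component_child tree_0 ics xi).
Qed.

Lemma connect_cadj_in_block (P : {set {set V}}) L A B b x y :
  partition P L -> cross_all G P b -> A \subset L -> B \in P -> x \in B ->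
  connect (rel_on (cadj b) A) x y -> y \in B.
Proof.
move=> /and3P [/eqP coverP trivP _] crossP /subsetP AL BP xB xy.
apply: (connect_closed _ xy xB) => u w uB /and3P [/andP [_ uw] _ /AL wL].
have wP : w \in cover P by rewrite coverP.
have [-> | Bw] := eqVneq B (pblock P w); first by rewrite mem_pblock.
by rewrite (crossP _ _ BP (pblock_mem wP) Bw u w uB) ?mem_pblock ?eqxx in uw.
Qed.

Lemma partition_cadj_connected (P : {set {set V}}) A b' b :
  partition P A -> 1 < #|P| -> cross_all G P b' -> b' != b ->
  {in A &, forall x y, connect (rel_on (cadj b) A) x y}.
Proof.
move=> /and3P [/eqP coverP trivP P_neq0] /card_gt1P [B1 [B2 [B1P B2P B12]]] crossP b'b.
have blockP u : u \in A -> pblock P u \in P /\ u \in pblock P u.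
  by rewrite -coverP => uP; rewrite pblock_mem ?mem_pblock.
apply: (connect_multipartite (part := pblock P)) => [u w uA wA uw|u uA].
  have [[uP uu] [wP ww]] := (blockP u uA, blockP w wA).
  rewrite /cadj (crossP _ _ uP wP uw u w uu ww) b'b andbT.
  by apply: contra uw => /eqP ->.
have [B [BP Bu]] : exists B, B \in P /\ B != pblock P u.
  have [B1u|] := eqVneq B1 (pblock P u); last by exists B1.
  by exists B2; rewrite -B1u eq_sym.
have [z zB] : exists z, z \in B by apply/set0Pn; apply: contraNneq P_neq0 => <-.
exists z; last by rewrite (def_pblock trivP BP zB).
by rewrite -coverP; apply/bigcupP; exists B.
Qed.

End Components.

Section UnionStep.
Variables (V : finType) (G : sgraph V).
Implicit Types (s : V -> nat) (cs : seq (cotree V)).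

Definition merge_into (L Gs : {set V}) s s' :=
  exists Phi : {set V} -> nat -> nat,
    (forall Gj, Gj \in components G L -> Gj != Gs ->
       {in colors s Gj, injective (Phi Gj)} /\
       {in colors s Gj, forall c, Phi Gj c \in colors s Gs} /\
       {in Gj, forall x, s' x = Phi Gj (s x)}) /\
    (forall x, x \notin L :\: Gs -> s' x = s x).

Variables (cs : seq (cotree V)) (k : nat).
Hypotheses (tree_0 : dcotree G (Node false cs)) (kcs : k < size cs).
Let L := leafset (Node false cs).
Let Gs := leafset (child cs k).

Lemma merge_out s s' x : merge_into L Gs s s' -> x \notin L -> s' x = s x.
Proof. by case=> Phi [_ s'E] xL; apply: s'E; rewrite inE negb_and xL orbT. Qed.

Lemma merge_kept s s' x : merge_into L Gs s s' -> x \in Gs -> s' x = s x.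
Proof. by case=> Phi [_ s'E] xGs; apply: s'E; rewrite inE xGs. Qed.

Lemma merge_child s s' i : merge_into L Gs s s' -> i < size cs ->
  exists g, [/\ {in colors s (leafset (child cs i)) &, injective g},
    {in leafset (child cs i), forall x, s' x = g (s x)} &
    {in colors s (leafset (child cs i)), forall c, g c \in colors s Gs}].
Proof.
move=> merge ics; have [->|ik] := eqVneq i k.
  by exists id; split => // x xGs; rewrite (merge_kept merge xGs).
case: merge => Phi [Phi_ok _].
have [] := Phi_ok (leafset (child cs i)); first by apply/components_node => //; exists i.
  by apply: contra ik => /eqP /(dcotree_leafset_inj tree_0 ics kcs) ->.
move=> Phi_inj [Phi_in s'E]; exists (Phi (leafset (child cs i))).
by split=> // c d cin _; apply: Phi_inj.
Qed.

Lemma merge_proper s s' : merge_into L Gs s s' ->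
  (forall i, i < size cs -> proper_on G (leafset (child cs i)) s) -> proper_on G L s'.
Proof.
move=> merge s_ok x y /leafset_nodeP [i ics xi] /leafset_nodeP [j jcs yj] xy.
have [eij|ij] := eqVneq i j; last by rewrite (dcotree_cross tree_0 ics jcs ij xi yj) in xy.
subst j; have [g [g_inj s'E _]] := merge_child merge ics.
rewrite !s'E //; apply: contra (s_ok i ics x y xi yj xy).
by move=> /eqP /g_inj -> //; apply: mem_colors.
Qed.

Lemma merge_colors s s' : merge_into L Gs s s' -> colors s' L =i colors s Gs.
Proof.
move=> merge c; apply/colorsP/idP => [[x /leafset_nodeP [i ics xi] ->]|].
  by have [g [_ s'E g_in]] := merge_child merge ics; rewrite s'E // g_in ?mem_colors.
case/colorsP => x xGs ->; exists x; last by rewrite (merge_kept merge xGs).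
exact: subsetP (leafset_child false kcs) x xGs.
Qed.

Lemma merge_ncol s s' : merge_into L Gs s s' -> ncol s' L = ncol s Gs.
Proof. by move/merge_colors/eq_ncol. Qed.

(* The n-th color of a component goes to the n-th color of [Gs]; all other values go
   above every color of [Gs], which keeps each [Phi Gj] injective. *)
Lemma merge_exists s : (forall i, i < size cs -> ncol s (leafset (child cs i)) <= ncol s Gs) ->
  exists s', merge_into L Gs s s'.
Proof.
move=> small; set cGs := colors s Gs; pose top := \max_(c <- cGs) c.
pose Phi X c := if c \in colors s X then nth 0 cGs (index c (colors s X)) else c + top.+1.
exists (fun x => if x \in L :\: Gs then Phi [set y in L | connect (restr G L) x y] (s x)
            else s x), Phi.
have top_ub c : c \in cGs -> c <= top by move=> cin; apply: (leq_bigmax_seq _ cin).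
split=> [_ /(components_node _ tree_0) [i ics ->] ik|x /negbTE -> //].
have idx_lt c : c \in colors s (leafset (child cs i)) ->
    index c (colors s (leafset (child cs i))) < size cGs.
  by move=> cin; apply: leq_trans (small i ics); rewrite /ncol index_mem.
have Phi_in c : c \in colors s (leafset (child cs i)) -> Phi (leafset (child cs i)) c \in cGs.
  by move=> cin; rewrite /Phi cin mem_nth ?idx_lt.
split; [|split=> // x xi].
  move=> c cin d; have := Phi_in c cin; rewrite {2}/Phi /Phi cin; case: ifP => din.
    move=> _ /eqP; rewrite nth_uniq ?idx_lt ?uniq_colors // => /eqP eq_idx.
    by rewrite -(nth_index 0 cin) eq_idx nth_index.
  by move=> /top_ub + cd; rewrite cd addnS ltnNge leq_addl.
have xGs : x \notin Gs.
  by apply: contra ik => xk; rewrite (dcotree_disj tree_0 ics kcs xi xk).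
rewrite inE xGs (subsetP (leafset_child false ics)) //=.
by rewrite (component_child tree_0 ics xi).
Qed.

End UnionStep.

Section NodeColors.
Variables (V : finType) (G : sgraph V).
Implicit Types (s : V -> nat) (cs : seq (cotree V)).

Lemma ncol_node s b cs :
  (forall i j x y, i < size cs -> j < size cs -> i != j ->
     x \in leafset (child cs i) -> y \in leafset (child cs j) -> s x != s y) ->
  ncol s (leafset (Node b cs)) = \sum_(i < size cs) ncol s (leafset (child cs i)).
Proof.
elim: cs => [|c cs IHcs] s_sep.
  by rewrite big_ord0 -(ncol0 s); congr ncol; apply/setP => x; rewrite !inE.
rewrite leafset_cons big_ord_recl ncolU => [|x y xc /leafset_nodeP [j jcs yj]].
  by rewrite IHcs // => i j x y ics jcs ij; apply: (s_sep i.+1 j.+1).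
exact: (s_sep 0 j.+1).
Qed.

Lemma chi_join cs : dcotree G (Node true cs) ->
  \sum_(i < size cs) chi G (leafset (child cs i)) <= chi G (leafset (Node true cs)).
Proof.
move=> tree_1; have [s s_ok s_le] := chi_optimal G (leafset (Node true cs)).
apply: leq_trans s_le; rewrite ncol_node => [|i j x y ics jcs ij xi yj].
  apply: leq_sum => i _; have [x xi] := dcotree_child_neq0 tree_1 (ltn_ord i).
  exact: chi_le_ncol xi (proper_onS (leafset_child true (ltn_ord i)) s_ok).
apply: s_ok; rewrite ?(dcotree_cross tree_1 ics jcs ij xi yj) //.
  exact: subsetP (leafset_child true ics) x xi.
exact: subsetP (leafset_child true jcs) y yj.
Qed.

Definition max_chi_child cs :=
  let chis := [seq chi G (leafset c) | c <- cs] in index (foldr maxn 0 chis) chis.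

Lemma foldr_maxn_ge (l : seq nat) n : n \in l -> n <= foldr maxn 0 l.
Proof.
elim: l => [|m l IHl] //=; rewrite inE => /orP [/eqP ->|/IHl]; first exact: leq_maxl.
by move/leq_trans; apply; apply: leq_maxr.
Qed.

Lemma foldr_maxn_mem (l : seq nat) : 0 < size l -> foldr maxn 0 l \in l.
Proof.
elim: l => [|m [|n l] IHl] // _; first by rewrite /= maxn0 mem_head.
rewrite [foldr _ _ _]/= inE /maxn; case: ltnP => _; first by rewrite IHl ?orbT.
by rewrite eqxx.
Qed.

Lemma max_chi_child_lt cs : 0 < size cs -> max_chi_child cs < size cs.
Proof.
move=> cs0; rewrite /max_chi_child -(size_map (fun c => chi G (leafset c))) index_mem.
by rewrite foldr_maxn_mem ?size_map.
Qed.

Lemma max_chi_child_max cs i : i < size cs ->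
  chi G (leafset (child cs i)) <= chi G (leafset (child cs (max_chi_child cs))).
Proof.
move=> ics; have cs0 : 0 < size cs by apply: leq_ltn_trans ics.
rewrite -!(nth_map cotree0 0 (fun c => chi G (leafset c))) ?max_chi_child_lt //.
by rewrite nth_index ?foldr_maxn_mem ?size_map // foldr_maxn_ge ?mem_nth ?size_map.
Qed.

End NodeColors.

Section CotreeColorMinimal.
Variables (V : finType) (G : sgraph V).
Implicit Types (s : V -> nat) (t : cotree V) (cs : seq (cotree V)).

Definition child_parts cs : {set {set V}} := [set leafset (child cs i) | i : 'I_(size cs)].

Lemma child_partsP cs B :
  reflect (exists2 i, i < size cs & B = leafset (child cs i)) (B \in child_parts cs).
Proof. by apply: (iffP imsetP) => [[i _ ->]|[i ics ->]]; [exists i | exists (Ordinal ics)]. Qed.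

Lemma child_parts_decomposition b cs : dcotree G (Node b cs) ->
  [/\ partition (child_parts cs) (leafset (Node b cs)), 1 < #|child_parts cs|
    & cross_all G (child_parts cs) b].
Proof.
move=> tree_b; have cs2 := dcotree_size tree_b; have cs0 := dcotree_size_gt0 tree_b.
split; first apply/and3P; first split.
- apply/eqP/setP => x; apply/bigcupP/leafset_nodeP => [[_ /child_partsP [i ics ->]]|[i ics]].
    by exists i.
  by exists (leafset (child cs i)) => //; apply/child_partsP; exists i.
- apply/trivIsetP => _ _ /child_partsP [i ics ->] /child_partsP [j jcs ->] ij.
  rewrite -setI_eq0; apply/set0Pn => -[x]; rewrite inE => /andP [xi xj]; move: ij.
  by rewrite (dcotree_disj tree_b ics jcs xi xj) eqxx.
- apply/negP => /child_partsP [i ics i0]; have [x] := dcotree_child_neq0 tree_b ics.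
  by rewrite -i0 inE.
- apply/card_gt1P; exists (leafset (child cs 0)), (leafset (child cs 1)).
  split; [by apply/child_partsP; exists 0 | by apply/child_partsP; exists 1 |].
  by apply/eqP => /(dcotree_leafset_inj tree_b cs0 cs2).
move=> _ _ /child_partsP [i ics ->] /child_partsP [j jcs ->] ij.
move=> x y; apply: (dcotree_cross tree_b ics jcs).
by apply: contra ij => /eqP ->.
Qed.

Definition cotree_tight s t :=
  forall p u, subtree t p = Some u -> ncol s (leafset u) = chi G (leafset u).

Lemma cotree_tight_leaf s (v : V) : cotree_tight s (Leaf v).
Proof. by case=> [|i p] u //= [<-]; rewrite leafset_leaf; case: (optimal_K1 G s v). Qed.

Lemma cotree_tight_node s b cs :
  ncol s (leafset (Node b cs)) = chi G (leafset (Node b cs)) ->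
  (forall i, i < size cs -> cotree_tight s (child cs i)) -> cotree_tight s (Node b cs).
Proof.
move=> tight_b tight_cs [|i p] u /=; first by case=> <-.
case csi: (onth cs i) => [c|] //= cu; case/onthP: csi => ics ?; subst c.
exact: tight_cs i ics p u cu.
Qed.

Lemma cotree_tight_root s t : cotree_tight s t -> ncol s (leafset t) = chi G (leafset t).
Proof. by move=> tight_t; apply: (tight_t [::]). Qed.

Lemma cotree_tight_child s b cs i : cotree_tight s (Node b cs) -> i < size cs ->
  cotree_tight s (child cs i).
Proof. by move=> tight_b ics p u cu; apply: (tight_b (i :: p)); rewrite subtree_cons. Qed.

Lemma cotree_tight_color_minimal s t : dcotree G t -> cotree_tight s t ->
  color_minimal G s (leafset t).
Proof.
elim/cotree_ind_nth: t => [v|b cs IHcs] tree_t tight_t.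
  by rewrite leafset_leaf; apply: cm_K1; rewrite -leafset_leaf; apply: cotree_tight_root.
have [parts parts_gt1 parts_cross] := child_parts_decomposition tree_t.
apply: (cm_op parts parts_gt1 parts_cross); last exact: cotree_tight_root.
move=> _ /child_partsP [i ics ->].
exact: IHcs (dcotree_child tree_t ics) (cotree_tight_child tight_t ics).
Qed.

Lemma optimal_rec_minimal s t : dcotree G t -> leafset t = setT ->
  (forall p u, subtree t p = Some u -> optimal_on G (leafset u) s) -> rec_minimal G s.
Proof.
move=> tree_t t_V opt; split; first by rewrite -t_V; case: (opt [::] t erefl).
by rewrite -t_V; apply: cotree_tight_color_minimal => // p u /opt [].
Qed.

End CotreeColorMinimal.

Section Soundness.
Variables (V : finType) (G : sgraph V) (T : cotree V) (ord : seq (seq nat)).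
Hypotheses (tree_T : dcotree G T) (ord_T : traversal T ord).
Implicit Types (s : V -> nat) (cs : seq (cotree V)) (p q : seq nat) (pre : seq (seq nat)).

Definition below_common pre x y :=
  exists q t, [/\ q \in pre, subtree T q = Some t, x \in leafset t & y \in leafset t].

Definition loop_inv pre s :=
  (forall q t, q \in pre -> subtree T q = Some t -> optimal_on G (leafset t) s) /\
  (forall x y, s x = s y -> x = y \/ below_common pre x y).

Lemma loop_inv_init s0 : injective s0 -> loop_inv [::] s0.
Proof. by move=> s0_inj; split => // x y /s0_inj ->; left. Qed.

Lemma below_common_rcons pre p x y :
  below_common pre x y -> below_common (rcons pre p) x y.
Proof. by case=> q [t [qpre]]; exists q, t; rewrite mem_rcons inE qpre orbT. Qed.

Section Step.
Variables (pre post : seq (seq nat)) (p : seq nat) (b : bool) (cs : seq (cotree V)).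
Hypotheses (ord_p : ord = pre ++ p :: post) (T_p : subtree T p = Some (Node b cs)).
Let L := leafset (Node b cs).
Let tree_p : dcotree G (Node b cs) := dcotree_subtree tree_T T_p.

Lemma p_notin_pre : p \notin pre.
Proof.
case: ord_T => + _; rewrite ord_p cat_uniq => /and3P [_ + _].
by apply: contra => ppre; apply/hasP; exists p; rewrite ?mem_head.
Qed.

Lemma mem_pre_index q : (q \in pre) = (index q ord < size pre).
Proof.
rewrite ord_p index_cat; case: ifP => [qpre|_]; first by rewrite index_mem qpre.
by rewrite ltnNge leq_addr.
Qed.

Lemma index_p : index p ord = size pre.
Proof. by rewrite ord_p index_cat (negbTE p_notin_pre) /= eqxx addn0. Qed.

Lemma inner_child_processed i b' cs' : i < size cs -> child cs i = Node b' cs' ->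
  rcons p i \in pre.
Proof.
move=> ics csi; case: ord_T => _ [inner_ord below_first].
have pi_ord : rcons p i \in ord.
  by apply/inner_ord; exists b', cs'; rewrite (subtree_rcons T_p ics) csi.
rewrite mem_pre_index -index_p below_first ?prefix_rcons //.
  by apply/inner_ord; exists b, cs.
by apply/eqP => /(congr1 size); rewrite size_rcons => /n_Sn.
Qed.

Lemma child_optimal s i : loop_inv pre s -> i < size cs ->
  optimal_on G (leafset (child cs i)) s.
Proof.
move=> [opt _] ics; case csi: (child cs i) => [v|b' cs'].
  by rewrite leafset_leaf; apply: optimal_K1.
by apply: (opt (rcons p i)); rewrite ?(inner_child_processed ics csi) ?(subtree_rcons T_p ics) ?csi.
Qed.

(* Ancestors of p come after p in the traversal, so a processed vertex meeting the
   leaves of p lies below p. *)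
Lemma processed_in_child q t x : q \in pre -> subtree T q = Some t ->
  x \in leafset t -> x \in L -> exists2 i, i < size cs & leafset t \subset leafset (child cs i).
Proof.
move=> qpre T_q xt xL; case/orP: (dcotree_prefix tree_T T_p T_q xL xt) => [/prefixP [r ?]|qp].
  subst q; case: r T_q qpre => [|i r]; first by rewrite cats0 (negbTE p_notin_pre).
  rewrite subtree_cat T_p /=; case csi: (onth cs i) => [c|] //= cu _.
  by case/onthP: csi => ics ?; subst c; exists i => //; apply: leafset_subtree cu.
have [eqp | qnp] := eqVneq q p; first by rewrite eqp (negbTE p_notin_pre) in qpre.
case: ord_T => _ [inner_ord below_first].
have q_ord : q \in ord by rewrite ord_p mem_cat qpre.
have p_ord : p \in ord by apply/inner_ord; exists b, cs.
have := below_first q p q_ord p_ord qp qnp.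
by rewrite index_p ltnNge ltnW // -mem_pre_index.
Qed.

Lemma below_common_child x y i j : below_common pre x y ->
  i < size cs -> j < size cs -> x \in leafset (child cs i) -> y \in leafset (child cs j) -> i = j.
Proof.
move=> [q [t [qpre T_q xt yt]]] ics jcs xi yj.
have [k kcs /subsetP tk] := processed_in_child qpre T_q xt (subsetP (leafset_child b ics) x xi).
by rewrite -(dcotree_disj tree_p kcs ics (tk x xt) xi) (dcotree_disj tree_p kcs jcs (tk y yt) yj).
Qed.

Lemma loop_inv_join s : b = true -> loop_inv pre s -> loop_inv (rcons pre p) s.
Proof.
move=> b1 inv; have [opt sep] := inv.
have sL : proper_on G L s.
  move=> x y /leafset_nodeP [i ics xi] /leafset_nodeP [j jcs yj] xy.
  have [eij|ij] := eqVneq i j; first by subst j; apply: (child_optimal inv ics).1.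
  apply/eqP => /sep [exy|/below_common_child eij]; first by rewrite exy adj_irr in xy.
  by rewrite (eij i j) ?eqxx in ij.
split=> [q t|x y /sep [->|/below_common_rcons]]; [|by left|by right].
rewrite mem_rcons inE => /orP [/eqP -> | qpre]; last exact: opt.
rewrite T_p => -[<-]; split => //; apply/eqP; rewrite eqn_leq; apply/andP; split.
  rewrite ncol_node => [|i j x y ics jcs ij xi yj]; last first.
    apply: sL; rewrite ?(subsetP (leafset_child b _) _ xi) ?(subsetP (leafset_child b _) _ yj) //.
    by rewrite (dcotree_cross tree_p ics jcs ij xi yj).
  have tree_1 : dcotree G (Node true cs) by rewrite -b1.
  rewrite (eq_bigr _ (fun i _ => (child_optimal inv (ltn_ord i)).2)).
  exact: chi_join tree_1.
have [x xL] := dcotree_leafset_neq0 tree_p.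
exact: chi_le_ncol xL sL.
Qed.

End Step.

Section Merge.
Variables (pre post : seq (seq nat)) (p : seq nat) (cs : seq (cotree V)).
Variables (s s' : V -> nat) (k : nat).
Hypotheses (ord_p : ord = pre ++ p :: post) (T_p : subtree T p = Some (Node false cs)).
Hypotheses (inv : loop_inv pre s) (kcs : k < size cs).
Let L := leafset (Node false cs).
Hypothesis merge : merge_into G L (leafset (child cs k)) s s'.
Let tree_0 : dcotree G (Node false cs) := dcotree_subtree tree_T T_p.

Lemma merge_node_optimal : optimal_on G L s'.
Proof.
have s'L : proper_on G L s'.
  apply: (merge_proper tree_0 kcs merge) => i ics.
  by case: (child_optimal ord_p T_p inv ics).
split => //; apply/eqP; rewrite eqn_leq; apply/andP; split; last first.
  by have [x xL] := dcotree_leafset_neq0 tree_0; apply: chi_le_ncol xL s'L.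
rewrite (merge_ncol tree_0 kcs merge) (child_optimal ord_p T_p inv kcs).2.
by apply: chiS; apply: leafset_child.
Qed.

Lemma merge_processed_optimal q t : q \in pre -> subtree T q = Some t ->
  optimal_on G (leafset t) s'.
Proof.
move=> qpre T_q; have opt_t := inv.1 q t qpre T_q.
have [x /andP [xt xL]|disj] := pickP (fun x => (x \in leafset t) && (x \in L)).
  have [i ics /subsetP ti] := processed_in_child ord_p T_p qpre T_q xt xL.
  have [g [g_inj s'E _]] := merge_child tree_0 kcs merge ics.
  apply: optimal_relabel opt_t => [y yt|]; first by rewrite s'E ?ti.
  move=> c d /colorsP [y yt ->] /colorsP [z zt ->].
  by apply: g_inj; apply: mem_colors; apply: ti.
apply: eq_in_optimal opt_t => y yt; symmetry; apply: (merge_out merge).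
by apply/negP => yL; move: (disj y); rewrite yt yL.
Qed.

Lemma merge_colors_sep x y : x \in L -> y \notin L -> s' x != s' y.
Proof.
move=> xL yL; apply/eqP => sxy.
have : s' x \in colors s' L by apply: mem_colors.
rewrite (merge_colors tree_0 kcs merge) => /colorsP [z zk sz].
have zL : z \in L by apply: subsetP (leafset_child false kcs) z zk.
rewrite sz (merge_out merge) // in sxy.
case: (inv.2 z y sxy) => [ezy|[q [t [qpre T_q zt yt]]]]; first by rewrite -ezy zL in yL.
have [i ics /subsetP ti] := processed_in_child ord_p T_p qpre T_q zt zL.
by move: yL; rewrite (subsetP (leafset_child false ics)) // ti.
Qed.

Lemma loop_inv_merge : loop_inv (rcons pre p) s'.
Proof.
split=> [q t|x y sxy].
  rewrite mem_rcons inE => /orP [/eqP -> | qpre]; last exact: merge_processed_optimal.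
  by rewrite T_p => -[<-]; apply: merge_node_optimal.
have [xL|xL] := boolP (x \in L); have [yL|yL] := boolP (y \in L).
- by right; exists p, (Node false cs); rewrite mem_rcons mem_head.
- by have := merge_colors_sep xL yL; rewrite sxy eqxx.
- by have := merge_colors_sep yL xL; rewrite sxy eqxx.
rewrite !(merge_out merge) // in sxy.
by case: (inv.2 x y sxy) => [->|/below_common_rcons]; [left|right].
Qed.

End Merge.

Lemma step_feasible pre post p s : ord = pre ++ p :: post -> loop_inv pre s ->
  exists s', step G T p s s'.
Proof.
move=> ord_p inv; rewrite /step.
case T_p: (subtree T p) => [[v|[] cs]|]; try by exists s.
have tree_0 := dcotree_subtree tree_T T_p.
pose k := max_chi_child G cs.
have kcs : k < size cs by apply/max_chi_child_lt/(dcotree_size_gt0 tree_0).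
have chi_max i : i < size cs -> chi G (leafset (child cs i)) <= chi G (leafset (child cs k)).
  exact: max_chi_child_max.
have [s' merge] : exists s', merge_into G (leafset (Node false cs)) (leafset (child cs k)) s s'.
  apply: (merge_exists tree_0 kcs) => i ics.
  by rewrite (child_optimal ord_p T_p inv ics).2 (child_optimal ord_p T_p inv kcs).2 chi_max.
exists s', (leafset (child cs k)); first by apply/components_node => //; exists k.
by split=> // _ /(components_node _ tree_0) [i ics ->]; apply: chi_max.
Qed.

Lemma loop_inv_step pre post p s s' : ord = pre ++ p :: post -> loop_inv pre s ->
  step G T p s s' -> loop_inv (rcons pre p) s'.
Proof.
move=> ord_p inv; have [b [cs T_p]] : inner T p.
  by case: ord_T => _ [inner_ord _]; apply/inner_ord; rewrite ord_p mem_cat mem_head orbT.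
rewrite /step T_p; case: b T_p => T_p.
  by move/functional_extensionality ->; apply: (loop_inv_join ord_p T_p erefl inv).
case=> _ /(components_node _ (dcotree_subtree tree_T T_p)) [k kcs ->] [_ merge].
exact: (loop_inv_merge ord_p T_p inv kcs merge).
Qed.

Lemma loop_inv_run o pre rest s s' : ord = pre ++ o ++ rest -> loop_inv pre s ->
  run G T o s s' -> loop_inv (pre ++ o) s'.
Proof.
elim: o pre s => [|p o IHo] pre s /= ord_o inv.
  by move/functional_extensionality ->; rewrite cats0.
case=> s1 [step_p run_o]; rewrite -cat_rcons.
apply: IHo run_o; first by rewrite cat_rcons.
exact: loop_inv_step ord_o inv step_p.
Qed.

Lemma run_step_feasible s0 o1 p o2 s : injective s0 -> ord = o1 ++ p :: o2 ->
  run G T o1 s0 s -> exists s', step G T p s s'.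
Proof.
move=> s0_inj ord_p run_o1; apply: (step_feasible ord_p).
exact: (loop_inv_run (pre := [::]) ord_p (loop_inv_init s0_inj) run_o1).
Qed.

Lemma run_optimal s0 s : injective s0 -> run G T ord s0 s ->
  forall p t, subtree T p = Some t -> optimal_on G (leafset t) s.
Proof.
move=> s0_inj run_ord p [v|b cs] T_p; first by rewrite leafset_leaf; apply: optimal_K1.
have [opt _] := loop_inv_run (pre := [::]) (rest := [::]) (esym (cats0 ord))
  (loop_inv_init s0_inj) run_ord.
by apply: (opt p _ _ T_p); case: ord_T => _ [inner_ord _]; apply/inner_ord; exists b, cs.
Qed.

End Soundness.

Section RecMinimalTight.
Variables (V : finType) (G : sgraph V).
Implicit Types (s : V -> nat) (cs : seq (cotree V)) (S : seq nat).

Definition children_leafset cs S : {set V} :=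
  [set x | has (fun i => x \in leafset (child cs i)) S].

Lemma children_leafsetP cs S x :
  reflect (exists2 i, i \in S & x \in leafset (child cs i)) (x \in children_leafset cs S).
Proof. by rewrite inE; apply: hasP. Qed.

Lemma children_leafset_iota b cs :
  children_leafset cs (iota 0 (size cs)) = leafset (Node b cs).
Proof.
apply/setP => x; apply/children_leafsetP/leafset_nodeP => -[i].
  by rewrite mem_iota => /andP [_ ics]; exists i.
by exists i; rewrite ?mem_iota.
Qed.

Section SplitNode.
Variables (s : V -> nat) (A : {set V}) (P : {set {set V}}) (b' : bool).
Hypotheses (partA : partition P A) (P_gt1 : 1 < #|P|) (crossP : cross_all G P b').
Variables (b : bool) (cs : seq (cotree V)) (S : seq nat).
Hypotheses (tree_b : dcotree G (Node b cs)) (S_lt : forall i, i \in S -> i < size cs).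
Hypothesis A_S : A = children_leafset cs S.

Lemma children_leafset_node : A \subset leafset (Node b cs).
Proof.
apply/subsetP => x; rewrite A_S => /children_leafsetP [i /S_lt ics xi].
by apply/leafset_nodeP; exists i.
Qed.

Lemma child_sub_split i : i \in S -> leafset (child cs i) \subset A.
Proof. by move=> iS; apply/subsetP => x xi; rewrite A_S; apply/children_leafsetP; exists i. Qed.

(* Otherwise A would be cadj b-connected, whereas no cadj b-edge leaves a child. *)
Lemma split_label i1 i2 : i1 \in S -> i2 \in S -> i1 != i2 -> b' = b.
Proof.
move=> i1S i2S i12; apply/eqP/negPn/negP => b'b.
have [x1 x1i] := dcotree_child_neq0 tree_b (S_lt i1S).
have [x2 x2i] := dcotree_child_neq0 tree_b (S_lt i2S).
have [parts _ cross_parts] := child_parts_decomposition tree_b.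
have i1_parts : leafset (child cs i1) \in child_parts cs.
  by apply/child_partsP; exists i1; rewrite ?S_lt.
have x1A := subsetP (child_sub_split i1S) x1 x1i.
have x2A := subsetP (child_sub_split i2S) x2 x2i.
have x2i1 := connect_cadj_in_block parts cross_parts children_leafset_node i1_parts x1i
  (partition_cadj_connected partA P_gt1 crossP b'b x1A x2A).
by move: i12; rewrite (dcotree_disj tree_b (S_lt i1S) (S_lt i2S) x2i1 x2i) eqxx.
Qed.

Lemma split_child_in_block j B x : b' = b -> j \in S -> B \in P ->
  x \in leafset (child cs j) -> x \in B -> leafset (child cs j) \subset B.
Proof.
move=> b'b jS BP xj xB; apply/subsetP => y yj.
have crossP_b : cross_all G P b by rewrite -b'b.
apply: (connect_cadj_in_block partA crossP_b (child_sub_split jS) BP xB).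
exact: dcotree_child_connected tree_b (S_lt jS) x y xj yj.
Qed.

Lemma split_block B : b' = b -> B \in P ->
  B = children_leafset cs [seq j <- S | leafset (child cs j) \subset B].
Proof.
move=> b'b BP; apply/setP => y; apply/idP/children_leafsetP => [yB|[j]]; last first.
  by rewrite mem_filter => /andP [/subsetP jB _] /jB.
have : y \in A by case/and3P: partA => /eqP <- _ _; apply/bigcupP; exists B.
rewrite A_S => /children_leafsetP [j jS yj].
by exists j; rewrite // mem_filter (split_child_in_block b'b jS BP yj yB).
Qed.

End SplitNode.

Lemma color_minimal_children_tight s A : color_minimal G s A ->
  forall b cs S, dcotree G (Node b cs) -> (forall i, i \in S -> i < size cs) ->
  A = children_leafset cs S -> forall i, i \in S -> cotree_tight G s (child cs i).
Proof.
elim=> [x _ | {}A P b' partA P_gt1 crossP _ IH tightA] b cs S tree_b S_lt A_S i iS.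
  have := dcotree_child tree_b (S_lt i iS); have := child_sub_split A_S iS.
  case: (child cs i) => [v|b2 cs2] /subsetP sub_x tree_i; first exact: cotree_tight_leaf.
  have [y [z [/sub_x/set1P -> /sub_x/set1P ->]]] := dcotree_two_leaves tree_i.
  by rewrite eqxx.
have split_tight b2 cs2 S2 i1 i2 : dcotree G (Node b2 cs2) ->
    (forall i, i \in S2 -> i < size cs2) -> A = children_leafset cs2 S2 ->
    i1 \in S2 -> i2 \in S2 -> i1 != i2 -> forall i, i \in S2 -> cotree_tight G s (child cs2 i).
  move=> tree_2 S2_lt A_S2 i1S i2S i12 j jS.
  have b'b := split_label partA P_gt1 crossP tree_2 S2_lt A_S2 i1S i2S i12.
  have [x xj] := dcotree_child_neq0 tree_2 (S2_lt j jS).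
  have [BP xB] : pblock P x \in P /\ x \in pblock P x.
    have xA := subsetP (child_sub_split A_S2 jS) x xj.
    by case/and3P: partA => /eqP coverP _ _; rewrite pblock_mem ?mem_pblock coverP.
  apply: (IH _ BP b2 cs2 _ tree_2 _ (split_block partA crossP tree_2 S2_lt A_S2 b'b BP)).
    by move=> k; rewrite mem_filter => /andP [_ /S2_lt].
  by rewrite mem_filter jS (split_child_in_block partA crossP tree_2 S2_lt A_S2 b'b jS BP xj xB).
have [/hasP [j jS ji] | /hasPn all_i] := boolP (has (predC1 i) S).
  exact: (split_tight b cs S j i tree_b S_lt A_S jS iS ji i iS).
have A_i : A = leafset (child cs i).
  rewrite A_S; apply/setP => x; apply/children_leafsetP/idP => [[j jS]|xi]; last by exists i.
  by move/negPn/eqP: (all_i j jS) => ->.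
have := dcotree_child tree_b (S_lt i iS); rewrite A_i in tightA split_tight.
case: (child cs i) tightA split_tight => [v|b2 cs2] tightA split_tight tree_i.
  exact: cotree_tight_leaf.
apply: cotree_tight_node tightA _ => j jcs.
apply: (split_tight b2 cs2 (iota 0 (size cs2)) 0 1); rewrite ?mem_iota ?add0n //.
- by move=> k; rewrite mem_iota => /andP [].
- by rewrite (children_leafset_iota b2).
- exact: dcotree_size_gt0 tree_i.
exact: dcotree_size tree_i.
Qed.

Lemma rec_minimal_tight T s : dcotree G T -> leafset T = setT ->
  rec_minimal G s -> cotree_tight G s T.
Proof.
case: T => [v|b cs] tree_T T_V [_]; first by move=> _; apply: cotree_tight_leaf.
rewrite -T_V => cm_T; apply: cotree_tight_node => [|i ics]; first by case: cm_T.
apply: (color_minimal_children_tight cm_T (S := iota 0 (size cs)) tree_T).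
- by move=> j; rewrite mem_iota => /andP [].
- by rewrite (children_leafset_iota b).
by rewrite mem_iota.
Qed.

End RecMinimalTight.

Section Postorder.
Variable V : finType.
Implicit Types (t : cotree V) (cs : seq (cotree V)) (p q : seq nat)
  (po : cotree V -> seq (seq nat)).

Fixpoint postorder_from po (i : nat) cs : seq (seq nat) :=
  if cs is c :: cs' then map (cons i) (po c) ++ postorder_from po i.+1 cs' else [::].

Fixpoint postorder t : seq (seq nat) :=
  if t is Node _ cs then postorder_from postorder 0 cs ++ [:: [::]] else [::].

Lemma postorder_fromP po cs j q :
  reflect (exists i, exists2 q', i < size cs /\ q = (j + i) :: q' & q' \in po (child cs i))
    (q \in postorder_from po j cs).
Proof.
elim: cs j q => [|c cs IHcs] j q /=; first by rewrite in_nil; constructor => -[i [q' []]].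
rewrite mem_cat; apply: (iffP orP) => [[/mapP [q' q'c ->]|/IHcs [i [q' [ics ->] q'i]]]|].
- by exists 0, q'; rewrite ?addn0.
- by exists i.+1, q'; rewrite ?addSnnS.
case=> [[|i] [q' [ics ->] q'i]]; first by left; rewrite addn0 map_f.
by right; apply/IHcs; exists i, q'; rewrite ?addSnnS.
Qed.

Lemma nil_notin_postorder_from po cs j : [::] \notin postorder_from po j cs.
Proof. by apply/negP => /postorder_fromP [i [q' [_]]]. Qed.

Lemma uniq_postorder_from po cs j : (forall i, i < size cs -> uniq (po (child cs i))) ->
  uniq (postorder_from po j cs).
Proof.
elim: cs j => [|c cs IHcs] j //= uniq_po; rewrite cat_uniq map_inj_uniq ?(uniq_po 0) //=.
  rewrite IHcs ?andbT => [|i]; last exact: (uniq_po i.+1).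
  apply/hasPn => _ /postorder_fromP [i [q' [_ ->] _]]; apply/mapP => -[q'' _ [/eqP]].
  by rewrite addSnnS -{2}[j]addn0 eqn_add2l.
by move=> q1 q2 [].
Qed.

Lemma index_postorder_from po cs j i q : i < size cs -> q \in po (child cs i) ->
  index ((j + i) :: q) (postorder_from po j cs) =
  \sum_(k < i) size (po (child cs k)) + index q (po (child cs i)).
Proof.
elim: cs j i => [|c cs IHcs] j [|i] //= ics qi.
  by rewrite big_ord0 addn0 index_cat map_f // index_map //; move=> q1 q2 [].
rewrite index_cat ifF; last first.
  apply/negP => /mapP [q' _ [/eqP]].
  by rewrite -{2}[j]addn0 eqn_add2l.
by rewrite size_map -addSnnS IHcs // big_ord_recl addnA.
Qed.

Lemma inner_cons b cs i q : inner (Node b cs) (i :: q) <-> i < size cs /\ inner (child cs i) q.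
Proof.
split=> [[b' [cs']] /=|[ics [b' [cs' ciq]]]]; last by exists b', cs'; rewrite subtree_cons.
case csi: (onth cs i) => [c|] //= cq; case/onthP: csi => ics ?; subst c.
by split=> //; exists b', cs'.
Qed.

Lemma mem_postorder t q : q \in postorder t <-> inner t q.
Proof.
elim/cotree_ind_nth: t q => [v|b cs IHcs] q; first by split=> // -[b' [cs']]; case: q.
rewrite /= mem_cat inE; split=> [/orP [/postorder_fromP [i [q' [ics ->] q'i]]|/eqP ->]|].
- by rewrite add0n; apply/inner_cons; split=> //; apply/(IHcs i ics).
- by exists b, cs.
case: q => [|i q]; first by rewrite eqxx orbT.
case/inner_cons => ics /(IHcs i ics) qi.
by apply/orP; left; apply/postorder_fromP; exists i, q.
Qed.

Lemma uniq_postorder t : uniq (postorder t).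
Proof.
elim/cotree_ind_nth: t => [v|b cs IHcs] //=.
by rewrite cat_uniq uniq_postorder_from //= orbF andbT nil_notin_postorder_from.
Qed.

Lemma postorder_descendants_first t p q : p \in postorder t -> q \in postorder t ->
  prefix p q -> p != q -> index q (postorder t) < index p (postorder t).
Proof.
elim/cotree_ind_nth: t p q => [v|b cs IHcs] p q //=.
have nil_po := @nil_notin_postorder_from postorder cs 0.
rewrite !mem_cat !inE => pt qt pq /negbTE pnq.
have q_po : q \in postorder_from postorder 0 cs.
  by case/orP: qt => // /eqP qnil; move: pq pnq; rewrite qnil prefixs0 => /eqP ->.
rewrite !index_cat q_po; case: p pt pq pnq => [|i p] pt pq pnq.
  by rewrite (negbTE nil_po) /= addn0 index_mem.
have p_po : (i :: p) \in postorder_from postorder 0 cs by case/orP: pt => // /eqP.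
case: q qt q_po pq pnq => [|j q] qt q_po; first by rewrite (negbTE nil_po) in q_po.
rewrite p_po /= => /andP [/eqP eij pq]; subst j; rewrite eqseq_cons eqxx /= => pnq.
case/postorder_fromP: p_po => i' [p' [ics [ei ep]] p_i]; rewrite add0n in ei; subst i' p'.
case/postorder_fromP: q_po => i' [q' [_ [ei eq]] q_i]; rewrite add0n in ei; subst i' q'.
by rewrite -[i]add0n !index_postorder_from // ltn_add2l IHcs // pnq.
Qed.

Lemma postorder_traversal t : traversal t (postorder t).
Proof.
split; first exact: uniq_postorder.
by split=> [p|p q]; [apply: mem_postorder | apply: postorder_descendants_first].
Qed.

End Postorder.
Arguments postorder {V} t.

Section Tags.
Variables (V : finType) (kept : seq (cotree V) -> nat).
Implicit Types (t : cotree V) (cs : seq (cotree V)) (f : seq nat -> nat).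

Definition child_tag b cs m f i := if b || (i == kept cs) then m else f [:: i].

Fixpoint tag_from tg b cs m f x i (l : seq (cotree V)) : nat :=
  if l is c :: l' then
    if x \in leaves c then tg c (child_tag b cs m f i) (fun q => f (i :: q)) x
    else tag_from tg b cs m f x i.+1 l'
  else m.

(* [tag t m f x]: descending from the root of t to x, the current tag m is replaced
   by [f q] on entering, at relative position q, a child of a 0-vertex other than
   its kept child. *)
Fixpoint tag t m f x : nat :=
  if t is Node b cs then tag_from tag b cs m f x 0 cs else m.

Lemma tag_from_nth b cs m f x l j i : i < size l -> x \in leafset (child l i) ->
  (forall i', i' < i -> x \notin leafset (child l i')) ->
  tag_from tag b cs m f x j l =
  tag (child l i) (child_tag b cs m f (j + i)) (fun q => f ((j + i) :: q)) x.
Proof.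
elim: l j i => [|c l IHl] j [|i] //= il; rewrite inE => xi first_i.
  by rewrite xi addn0.
have := first_i 0 isT; rewrite inE => /negbTE ->.
by rewrite (IHl j.+1 i) ?addSnnS ?inE // => i' i'i; apply: (first_i i'.+1).
Qed.

Lemma tag_from_cases tg b cs m f x l j :
  (forall i, i < size l -> forall m' f', tg (child l i) m' f' x = m' \/
      exists2 q, q != [::] & tg (child l i) m' f' x = f' q) ->
  tag_from tg b cs m f x j l = m \/ exists2 q, q != [::] & tag_from tg b cs m f x j l = f q.
Proof.
elim: l j => [|c l IHl] j tg_cases /=; first by left.
case: ifP => xc; last by apply: IHl => i il; apply: (tg_cases i.+1).
case: (tg_cases 0 isT (child_tag b cs m f j) (fun q => f (j :: q))) => /= [->|[q _ ->]].
  by rewrite /child_tag; case: ifP => _; [left | right; exists [:: j]].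
by right; exists (j :: q).
Qed.

Lemma tag_cases t m f x : tag t m f x = m \/ exists2 q, q != [::] & tag t m f x = f q.
Proof.
elim/cotree_ind_nth: t m f => [v|b cs IHcs] m f /=; first by left.
by apply: tag_from_cases => i ics m' f'; apply: IHcs.
Qed.

End Tags.

Section Encoding.
Variable K : nat.

Definition enc c m := m * K + c.

Lemma enc_mod c m : c < K -> enc c m %% K = c.
Proof. by move=> cK; rewrite /enc modnMDl modn_small. Qed.

Lemma enc_inj c1 m1 c2 m2 : c1 < K -> c2 < K -> enc c1 m1 = enc c2 m2 -> c1 = c2 /\ m1 = m2.
Proof.
move=> c1K c2K e12; have c12 : c1 = c2 by rewrite -(enc_mod m1 c1K) e12 enc_mod.
split=> //; move/eqP: e12; rewrite /enc c12 eqn_add2r eqn_pmul2r; last exact: leq_ltn_trans c2K.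
by move/eqP.
Qed.

End Encoding.

Section Runs.
Variables (V : finType) (G : sgraph V).
Implicit Types (s : V -> nat) (t : cotree V) (cs : seq (cotree V)) (o : seq (seq nat)).

Lemma eq_run t o s1 s1' s2 s2' : run G t o s1 s2 -> s1 =1 s1' -> s2 =1 s2' -> run G t o s1' s2'.
Proof. by move=> + /functional_extensionality <- /functional_extensionality <-. Qed.

Lemma run_cat t o1 o2 s1 s2 s3 : run G t o1 s1 s2 -> run G t o2 s2 s3 -> run G t (o1 ++ o2) s1 s3.
Proof.
elim: o1 s1 => [|p o1 IHo1] s1 /=; first by move/functional_extensionality <-.
by case=> s [step_p run_o1] run_o2; exists s; split=> //; apply: IHo1 run_o2.
Qed.

Lemma run_child b cs i o s1 s2 : i < size cs -> run G (child cs i) o s1 s2 ->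
  run G (Node b cs) (map (cons i) o) s1 s2.
Proof.
move=> ics; elim: o s1 => [|p o IHo] s1 //= [s [step_p run_o]].
by exists s; split; [rewrite /step subtree_cons | apply: IHo].
Qed.

End Runs.

Section Completeness.
Variables (V : finType) (G : sgraph V) (s : V -> nat) (K : nat).
Hypothesis s_lt_K : forall x, s x < K.
Implicit Types (t : cotree V) (cs : seq (cotree V)) (f : seq nat -> nat).
Local Notation tag := (tag (max_chi_child G)).
Local Notation child_tag := (child_tag (max_chi_child G)).

Lemma tag_child b cs m f x i : dcotree G (Node b cs) -> i < size cs ->
  x \in leafset (child cs i) ->
  tag (Node b cs) m f x = tag (child cs i) (child_tag b cs m f i) (fun q => f (i :: q)) x.
Proof.
move=> tree_b ics xi; rewrite /= (tag_from_nth _ _ _ _ _ 0 ics xi) // => i' i'i.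
apply/negP => xi'; have i'cs := ltn_trans i'i ics.
by move: i'i; rewrite (dcotree_disj tree_b i'cs ics xi' xi) ltnn.
Qed.

Lemma tag_node_cases b cs m f x i : dcotree G (Node b cs) -> i < size cs ->
  x \in leafset (child cs i) ->
  (tag (Node b cs) m f x = m /\ (b || (i == max_chi_child G cs))) \/
  exists q, tag (Node b cs) m f x = f (i :: q).
Proof.
move=> tree_b ics xi; rewrite (tag_child m f tree_b ics xi).
case: (tag_cases (max_chi_child G) (child cs i) (child_tag b cs m f i) (fun q => f (i :: q)) x).
  by rewrite /child_tag; case: ifP => [b_i ->|_ ->]; [left | right; exists [::]].
by case=> q _ ->; right; exists q.
Qed.

Lemma tag_separates t m f : dcotree G t -> proper_on G (leafset t) s -> injective f ->
  (forall q, q != [::] -> f q != m) ->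
  {in leafset t &, forall x y, s x = s y -> tag t m f x = tag t m f y -> x = y}.
Proof.
elim/cotree_ind_nth: t m f => [v|b cs IHcs] m f tree_t s_ok f_inj f_m x y.
  by rewrite leafset_leaf !inE => /eqP -> /eqP ->.
move=> /leafset_nodeP [i ics xi] /leafset_nodeP [j jcs yj] sxy; have [eij|ij] := eqVneq i j.
  subst j; rewrite (tag_child m f tree_t ics xi) (tag_child m f tree_t ics yj).
  apply: (IHcs i ics _ _ (dcotree_child tree_t ics) (proper_onS (leafset_child b ics) s_ok)
    _ _ x y xi yj sxy); first by move=> q1 q2 /f_inj [].
  move=> q q0; rewrite /child_tag; case: ifP => _; first exact: f_m.
  by apply/eqP => /f_inj [] /eqP; apply/negP.
case: (tag_node_cases m f tree_t ics xi) => [[-> b_i]|[q ->]];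
  case: (tag_node_cases m f tree_t jcs yj) => [[-> b_j]|[q' ->]].
- move=> _; case: b tree_t s_ok b_i b_j => tree_t s_ok b_i b_j; last first.
    by move: ij; rewrite (eqP b_i) (eqP b_j) eqxx.
  have [xL yL] := (subsetP (leafset_child true ics) x xi, subsetP (leafset_child true jcs) y yj).
  by move: (s_ok x y xL yL); rewrite (dcotree_cross tree_t ics jcs ij xi yj) sxy eqxx => /(_ isT).
- by move/eqP; rewrite eq_sym (negbTE (f_m (j :: q') isT)).
- by move/eqP; rewrite (negbTE (f_m (i :: q) isT)).
by move/f_inj => [eij _]; rewrite eij eqxx in ij.
Qed.

Lemma colors_max_chi_child cs i : dcotree G (Node false cs) ->
  proper_on G (leafset (Node false cs)) s -> cotree_tight G s (Node false cs) -> i < size cs ->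
  {subset colors s (leafset (child cs i)) <= colors s (leafset (child cs (max_chi_child G cs)))}.
Proof.
move=> tree_0 s_ok tight_0 ics; set k := max_chi_child G cs.
have kcs : k < size cs by apply/max_chi_child_lt/(dcotree_size_gt0 tree_0).
have tight_cs j : j < size cs -> ncol s (leafset (child cs j)) = chi G (leafset (child cs j)).
  by move=> jcs; apply/cotree_tight_root/(cotree_tight_child tight_0 jcs).
have [s' merge] : exists s', merge_into G (leafset (Node false cs)) (leafset (child cs k)) s s'.
  by apply: (merge_exists tree_0 kcs) => j jcs; rewrite !tight_cs ?max_chi_child_max.
have s'_ok := merge_proper tree_0 kcs merge
  (fun j jcs => proper_onS (leafset_child false jcs) s_ok).
have [x xL] := dcotree_leafset_neq0 tree_0.
have k_in_L : {subset colors s (leafset (child cs k)) <= colors s (leafset (Node false cs))}.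
  by move=> c /colorsP [z zk ->]; apply/mem_colors/(subsetP (leafset_child false kcs)).
have L_le_k : ncol s (leafset (Node false cs)) <= ncol s (leafset (child cs k)).
  by rewrite (cotree_tight_root tight_0) -(merge_ncol tree_0 kcs merge) (chi_le_ncol xL s'_ok).
have [_ k_eq_L] := uniq_min_size (uniq_colors s _) k_in_L L_le_k.
move=> c /colorsP [z zi ->]; rewrite k_eq_L.
exact/mem_colors/(subsetP (leafset_child false ics)).
Qed.

Definition tagged t m f (o : V -> nat) x :=
  if x \in leafset t then enc K (s x) (tag t m f x) else o x.

Definition untagged t m (o : V -> nat) x := if x \in leafset t then enc K (s x) m else o x.

Section RunNode.
Variables (b : bool) (cs : seq (cotree V)) (m : nat) (f : seq nat -> nat) (o : V -> nat).
Hypotheses (tree_b : dcotree G (Node b cs)) (s_ok : proper_on G (leafset (Node b cs)) s).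
Hypothesis tight_b : cotree_tight G s (Node b cs).
Hypothesis run_cs : forall i, i < size cs -> forall m f o,
  run G (child cs i) (postorder (child cs i))
    (tagged (child cs i) m f o) (untagged (child cs i) m o).
Let L := leafset (Node b cs).
Let part x := find (fun c => x \in leaves c) cs.

Lemma part_child i x : i < size cs -> x \in leafset (child cs i) -> part x = i.
Proof. exact: dcotree_find tree_b. Qed.

Lemma part_lt x : x \in L -> part x < size cs /\ x \in leafset (child cs (part x)).
Proof. by case/leafset_nodeP => i ics xi; rewrite (part_child ics xi). Qed.

(* the coloring once the children [child cs i], i < j, have been processed *)
Definition stage j x := if x \in L then
  enc K (s x) (if part x < j then child_tag b cs m f (part x) else tag (Node b cs) m f x)
  else o x.

Lemma run_children_from l j : drop j cs = l ->
  run G (Node b cs) (postorder_from postorder j l) (stage j) (stage (size cs)).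
Proof.
elim: l j => [|c l IHl] j cs_j.
  have cs_le_j : size cs <= j by rewrite -subn_eq0 -size_drop cs_j.
  move=> x; rewrite /stage; case: ifP => // xL.
  by have [lt _] := part_lt xL; rewrite lt (leq_trans lt cs_le_j).
have jcs : j < size cs by rewrite ltnNge; apply/negP => /drop_oversize; rewrite cs_j.
move: cs_j; rewrite (drop_nth cotree0 jcs) => -[<- cs_j1].
apply: (run_cat _ (IHl _ cs_j1)); apply: (run_child _ jcs).
apply: eq_run (run_cs jcs (child_tag b cs m f j) (fun q => f (j :: q)) (stage j)) _ _ => x.
  rewrite /tagged /stage; case: ifP => // xj.
  rewrite (subsetP (leafset_child b jcs)) // (part_child jcs xj) ltnn.
  by rewrite (tag_child m f tree_b jcs xj).
rewrite /untagged /stage; case: ifP => xj.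
  by rewrite (subsetP (leafset_child b jcs)) // (part_child jcs xj) ltnSn.
case: ifP => // xL; have [_ x_part] := part_lt xL.
have part_j : part x != j by apply: contraFneq xj => <-.
by rewrite ltnS (leq_eqVlt (part x)) (negbTE part_j).
Qed.

Lemma stage_final i x : i < size cs -> x \in leafset (child cs i) ->
  stage (size cs) x = enc K (s x) (child_tag b cs m f i).
Proof.
move=> ics xi; rewrite /stage (subsetP (leafset_child b ics)) //.
by rewrite (part_child ics xi) ics.
Qed.

End RunNode.

Lemma stage_join cs m f o : dcotree G (Node true cs) ->
  stage true cs m f o (size cs) =1 untagged (Node true cs) m o.
Proof.
move=> tree_1 x; rewrite /untagged; case: ifP => [/leafset_nodeP [i ics xi]|xL].
  by rewrite (stage_final m f o tree_1 ics xi).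
by rewrite /stage xL.
Qed.

(* Each color [enc c (child_tag i)] goes to [enc c m]; this lands in the colors of the kept
   child since c is already a color of it. Other values are sent above every [enc _ m]. *)
Lemma step_union cs m f o : dcotree G (Node false cs) ->
  proper_on G (leafset (Node false cs)) s -> cotree_tight G s (Node false cs) ->
  step G (Node false cs) [::] (stage false cs m f o (size cs)) (untagged (Node false cs) m o).
Proof.
move=> tree_0 s_ok tight_0; have stage_i := stage_final m f o tree_0.
set k := max_chi_child G cs; have kcs : k < size cs.
  exact/max_chi_child_lt/(dcotree_size_gt0 tree_0).
have tag_k : child_tag false cs m f k = m by rewrite /child_tag eqxx.
set S := stage false cs m f o (size cs).
exists (leafset (child cs k)); first by apply/components_node => //; exists k.
split=> [_ /(components_node _ tree_0) [i ics ->]|]; first exact: max_chi_child_max.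
pose Phi X c := if c \in colors S X then enc K (c %% K) m else c + m.+1 * K.
exists Phi; split=> [_ /(components_node _ tree_0) [i ics ->] ik|x]; last first.
  rewrite inE negb_and negbK /untagged => /orP [xk|/negbTE xL]; last by rewrite /S /stage xL.
  by rewrite (subsetP (leafset_child false kcs)) // /S (stage_i k) // tag_k.
have colorsE c : c \in colors S (leafset (child cs i)) ->
    exists2 x, x \in leafset (child cs i) & c = enc K (s x) (child_tag false cs m f i).
  by case/colorsP => x xi ->; exists x; rewrite // /S (stage_i i).
split; [|split] => [c1 c1i c2|c ci|x xi].
- rewrite /Phi c1i; have [x1 x1i ->] := colorsE c1 c1i; rewrite enc_mod //.
  case: ifP => [/colorsE [x2 x2i ->]|_]; first by rewrite enc_mod // => /enc_inj [] // ->.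
  move=> e12; move: (leq_addl c2 (m.+1 * K)); rewrite -e12 /enc mulSn addnC leq_add2l.
  by rewrite leqNgt s_lt_K.
- rewrite /Phi ci; have [x xi ->] := colorsE c ci; rewrite enc_mod //.
  have := colors_max_chi_child tree_0 s_ok tight_0 ics (mem_colors s xi).
  case/colorsP => z zk ->; rewrite -tag_k -(stage_i k z kcs zk).
  exact: mem_colors.
rewrite /untagged (subsetP (leafset_child false ics)) // /Phi mem_colors // /S.
by rewrite (stage_i i x ics xi) enc_mod.
Qed.

Lemma run_postorder t m f o : dcotree G t -> proper_on G (leafset t) s -> cotree_tight G s t ->
  run G t (postorder t) (tagged t m f o) (untagged t m o).
Proof.
elim/cotree_ind_nth: t m f o => [v|b cs IHcs] m f o tree_t s_ok tight_t.
  by move=> x; rewrite /tagged /untagged; case: ifP.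
have run_cs i : i < size cs -> forall m f o, run G (child cs i) (postorder (child cs i))
    (tagged (child cs i) m f o) (untagged (child cs i) m o).
  move=> ics m' f' o'; apply: (IHcs i ics _ _ _ (dcotree_child tree_t ics) _).
    exact: (proper_onS (leafset_child b ics) s_ok).
  exact: (cotree_tight_child tight_t ics).
have run_children := run_children_from m f o tree_t run_cs (drop0 cs).
apply: (run_cat (eq_run run_children _ (frefl _))) => [x|].
  by rewrite /tagged /stage ltn0.
exists (untagged (Node b cs) m o); split=> //.
case: b tree_t s_ok tight_t {IHcs run_cs run_children} => tree_t s_ok tight_t.
  by move=> x; rewrite (stage_join m f o tree_t).
exact: step_union.
Qed.

End Completeness.

Lemma rec_minimal_run (V : finType) (G : sgraph V) (T : cotree V) (s : V -> nat) :
  dcotree G T -> leafset T = setT -> rec_minimal G s ->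
  exists s0 : V -> nat, injective s0 /\ exists ord, traversal T ord /\ run G T ord s0 s.
Proof.
move=> tree_T T_V s_rm; have tight_T := rec_minimal_tight tree_T T_V s_rm.
have s_ok : proper_on G (leafset T) s by rewrite T_V; case: s_rm.
pose K := (\max_(x : V) s x).+1; have s_lt_K x : s x < K by rewrite ltnS leq_bigmax.
pose f (q : seq nat) := (pickle q).+1.
have f_inj : injective f by move=> q1 q2 [] /(pcan_inj pickleK).
exists (tagged G s K T 0 f s); split.
  move=> x y; rewrite /tagged T_V !inE => /enc_inj [] // sxy.
  by apply: (tag_separates tree_T s_ok f_inj) => //; rewrite T_V inE.
exists (postorder T); split; first exact: postorder_traversal.
apply: eq_run (run_postorder s_lt_K 0 f s tree_T s_ok tight_T) (frefl _) _ => x.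
by rewrite /untagged T_V inE.
Qed.

Theorem theorem10 (V : finType) (G : sgraph V) (T : cotree V) :
  cograph G -> discr_cotree G T ->
  (forall s0 : V -> nat, injective s0 ->
   forall ord, traversal T ord ->
     (forall o1 p o2 s, ord = o1 ++ p :: o2 -> run G T o1 s0 s ->
        exists s', step G T p s s') /\
     (forall s, run G T ord s0 s -> rec_minimal G s)) /\
  (forall s : V -> nat, rec_minimal G s ->
     exists s0 : V -> nat, injective s0 /\
     exists ord, traversal T ord /\ run G T ord s0 s).
Proof.
move=> _ /discr_cotree_dcotree [tree_T T_V].
split=> [s0 s0_inj ord ord_T|s]; last exact: rec_minimal_run.
split=> [o1 p o2 s ord_p|s run_ord].
  exact: (run_step_feasible tree_T ord_T s0_inj ord_p).
exact: (optimal_rec_minimal tree_T T_V (run_optimal tree_T ord_T s0_inj run_ord)).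
Qed.
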